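(* There is an absolute constant $C_0$ such that the following holds for every integer $m\ge2$. Let $T$ be the balanced binary tree with $m$ leaves, and suppose that at least a $1/4$ fraction of the nodes of $T$ are marked. If $u$ is chosen uniformly at random among the marked nodes of $T$, then the expected number of nodes in the subtree of $T$ rooted at $u$ is at most $C_0\log m$.
   Context: The balanced binary tree with $m$ leaves is defined as follows: if $m=2^k$, it is the complete binary tree with $2^k$ leaves (all at depth $k$); if $2^k<m<2^{k+1}$, take the complete binary tree with $2^k$ leaves and add a pair of children to each of its $m-2^k$ leftmost leaves. It has $m$ leaves and $m-1$ internal nodes; ''nodes'' means all nodes (internal and leaves). *)

From Stdlib Require Import Reals.
From mathcomp Require Import all_boot.
Set Implicit Arguments. Unset Strict Implicit. Unset Printing Implicit Defensive.

Inductive btree := Leaf | Node of btree & btree.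

Fixpoint complete (k : nat) : btree :=
  if k is k'.+1 then Node (complete k') (complete k') else Leaf.

(* [grow j t] adds a pair of children to each of the (at most) j leftmost
   leaves of t; returns the new tree and the number of unused additions. *)
Fixpoint grow (j : nat) (t : btree) : btree * nat :=
  match t with
  | Leaf => if j is j'.+1 then (Node Leaf Leaf, j') else (Leaf, 0)
  | Node l r =>
      let: (l', j1) := grow j l in
      let: (r', j2) := grow j1 r in
      (Node l' r', j2)
  end.

(* Balanced binary tree with m leaves (m >= 1): with k = floor(log2 m),
   the complete tree with 2^k leaves with its m - 2^k leftmost leaves split. *)
Definition balanced (m : nat) : btree :=
  let k := trunc_log 2 m in (grow (m - 2 ^ k) (complete k)).1.

Fixpoint nleaves (t : btree) : nat :=
  if t is Node l r then nleaves l + nleaves r else 1.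

Fixpoint nnodes (t : btree) : nat :=
  if t is Node l r then (nnodes l + nnodes r).+1 else 1.

(* The list of all nodes of t in preorder, each node represented by the
   number of nodes of the subtree rooted at it. Node i of t (i < nnodes t)
   is the i-th node in preorder. *)
Fixpoint subsizes (t : btree) : seq nat :=
  if t is Node l r then nnodes t :: (subsizes l ++ subsizes r) else [:: 1].

Lemma size_subsizes t : size (subsizes t) = nnodes t.
Proof. by elim: t => //= l IHl r IHr; rewrite size_cat IHl IHr. Qed.

Definition subtree_size (t : btree) (i : 'I_(nnodes t)) : nat :=
  nth 0 (subsizes t) i.

From Stdlib Require Import Reals Lra.
From mathcomp Require Import all_boot zify.

(* Every node lies in the subtrees of at most [height t + 1] nodes (itself and
   its ancestors), so the subtree sizes of all nodes sum to at most
   [nnodes t * (height t + 1)].  The balanced tree with m leaves has height at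
   most [log2 m + 1], so if a quarter of its nodes are marked, the average
   subtree size of a marked node is at most [4 (log2 m + 2)],
   which is O(log m) because m >= 2. *)

Fixpoint height (t : btree) : nat :=
  if t is Node l r then (maxn (height l) (height r)).+1 else 0.

Lemma sumn_subsizes_le t : sumn (subsizes t) <= nnodes t * (height t).+1.
Proof.
elim: t => //= l IHl r IHr; rewrite sumn_cat.
set h := maxn _ _.
have hl : nnodes l * (height l).+1 <= nnodes l * h.+1.
  by rewrite leq_mul2l ltnS leq_maxl orbT.
have hr : nnodes r * (height r).+1 <= nnodes r * h.+1.
  by rewrite leq_mul2l ltnS leq_maxr orbT.
lia.
Qed.

Lemma nnodes_gt0 t : 0 < nnodes t.
Proof. by case: t. Qed.

Lemma sum_subtree_size t :
  \sum_(i : 'I_(nnodes t)) subtree_size i = sumn (subsizes t).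
Proof. by rewrite sumnE (big_nth 0) size_subsizes big_mkord. Qed.

Lemma sum_subtree_size_le {t} (A : {set 'I_(nnodes t)}) :
  \sum_(u in A) subtree_size u <= nnodes t * (height t).+1.
Proof.
apply: leq_trans (sumn_subsizes_le t).
rewrite -sum_subtree_size big_mkcond /=.
by apply: leq_sum => i _; case: (i \in A).
Qed.

Lemma height_complete k : height (complete k) = k.
Proof. by elim: k => //= k ->; rewrite maxnn. Qed.

Lemma height_grow j t : height (grow j t).1 <= (height t).+1.
Proof.
elim: t j => [|l IHl r IHr] j /=; first by case: j.
have := IHl j; case: (grow j l) => [l' j1] /= hl.
have := IHr j1; case: (grow j1 r) => [r' j2] /= hr.
rewrite ltnS geq_max; apply/andP; split.
- by apply: leq_trans hl _; rewrite ltnS leq_maxl.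
- by apply: leq_trans hr _; rewrite ltnS leq_maxr.
Qed.

Lemma height_balanced m : height (balanced m) <= (trunc_log 2 m).+1.
Proof. by rewrite -{1}(height_complete (trunc_log 2 m)); apply: height_grow. Qed.

Lemma INR_expn b k : INR (b ^ k) = pow (INR b) k.
Proof. by elim: k => //= k IH; rewrite expnS mult_INR IH. Qed.

Local Open Scope R_scope.

Lemma ln_le_compat x y : 0 < x -> x <= y -> ln x <= ln y.
Proof.
move=> x_gt0 [x_lt_y | <-]; last exact: Rle_refl.
exact/Rlt_le/ln_increasing.
Qed.

Lemma trunc_log2_ln {m} : (0 < m)%N -> INR (trunc_log 2 m) * ln 2 <= ln (INR m).
Proof.
move=> m_gt0; rewrite -ln_pow; last lra.
apply: ln_le_compat; first by apply: pow_lt; lra.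
have /leP/le_INR := trunc_logP (isT : (1 < 2)%N) m_gt0.
by rewrite INR_expn.
Qed.

Lemma avg_le_log2 (S M k : nat) (x : R) :
  (0 < M)%N -> (S <= 4 * M * k.+2)%N ->
  INR k * ln 2 <= ln x -> ln 2 <= ln x -> INR S / INR M <= 24 * ln x.
Proof.
move=> /ltP/lt_0_INR M_gt0 /leP/le_INR; rewrite !mult_INR !S_INR /= => S_le.
move=> klog ln2_le; apply: Rle_trans (_ : 4 * (INR k + 2) <= _).
  apply: (Rmult_le_reg_r (INR M)) => //.
  rewrite /Rdiv Rmult_assoc Rinv_l; nra.
(* Since [ln 2 > 1/2]: [4 k <= 8 k ln 2 <= 8 ln x] and [8 <= 16 ln 2 <= 16 ln x]. *)
have := ln_lt_2; have := pos_INR k; nra.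
Qed.

Theorem lemma24 :
  exists C0 : R,
    forall (m : nat), (2 <= m)%N ->
    forall marked : {set 'I_(nnodes (balanced m))},
      (nnodes (balanced m) <= 4 * #|marked|)%N ->
      Rle (Rdiv (INR (\sum_(u in marked) subtree_size u)) (INR #|marked|))
          (Rmult C0 (ln (INR m))).
Proof.
exists 24 => m m_ge2 marked marked_quarter.
apply: (avg_le_log2 _ _ (trunc_log 2 m)).
- by have := nnodes_gt0 (balanced m); lia.
- apply: leq_trans (sum_subtree_size_le marked) _.
  by apply: leq_mul; rewrite // ltnS height_balanced.
- exact: trunc_log2_ln (ltnW m_ge2).
- by apply: ln_le_compat; [lra | exact: (le_INR _ _ (leP m_ge2))].
Qed.
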